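(* For every odd integer $n \ge 3$, the sets $S_{0,0}(n)$ and $S_{1,1}(n)$ have the same cardinality.
   Context: For $n \ge 2$, let $\mathcal{I}_n$ be the set of all irreducible polynomials of degree $n$ in $\mathbb{F}_2[x]$. Every $f \in \mathcal{I}_n$ is monic with constant term $1$; write $f = x^n + f_{n-1}x^{n-1} + \cdots + f_1 x + 1$ with $f_k \in \mathbb{F}_2$. The coefficient $f_{n-1}$ is the trace of $f$ and $f_1$ is its cotrace. For $i,j \in \mathbb{F}_2$, $S_{i,j}(n)$ denotes the set of $f \in \mathcal{I}_n$ with $f_{n-1} = i$ and $f_1 = j$. *)

From mathcomp Require Import all_boot all_algebra.
From mathcomp Require Import boolp.
Set Implicit Arguments. Unset Strict Implicit. Unset Printing Implicit Defensive.
Import GRing.Theory.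
Local Open Scope ring_scope.

(* The monic polynomial of degree n over F_2 with lower coefficients c:
   x^n + c_{n-1} x^{n-1} + ... + c_0.  Every monic degree-n polynomial
   arises from exactly one c. *)
Definition monic_of (n : nat) (c : {ffun 'I_n -> 'F_2}) : {poly 'F_2} :=
  'X^n + \sum_(k < n) (c k)%:P * 'X^k.

(* S_{i,j}(n): irreducible degree-n polynomials f with f_{n-1} = i
   (trace) and f_1 = j (cotrace), encoded by their coefficient vector.  irreducible_poly is a Prop,
   reflected into bool with boolp's `[< _ >]. *)
Definition S (n : nat) (i j : 'F_2) : {set {ffun 'I_n -> 'F_2}} :=
  [set c | `[< irreducible_poly (monic_of c) >]
           && ((monic_of c)`_n.-1 == i) && ((monic_of c)`_1 == j)].

From HB Require Import structures.
From mathcomp Require Import all_boot all_algebra.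
From mathcomp Require Import zify boolp.

(* The shift f(x) -> f(x + 1) and the reciprocal f -> x^n f(1/x) preserve irreducible
   polynomials of degree n >= 2 over F_2.  Refine (trace, cotrace) of f by u = f'(1), the
   coefficient of x in f(x + 1).  For n odd and f irreducible, so that
   f(0) = f(1) = 1, the shift acts on (trace, cotrace, u) as (a, b, c) -> (a + 1, c, b)
   and the reciprocal as (a, b, c) -> (b, a, c + 1).  Hence the shift exchanges the
   polynomials of S_{0,0} with u = 1 and those of S_{1,1} with u = 0, while its
   conjugate by the reciprocal, f -> (x + 1)^n f(x / (x + 1)), exchanges those of
   S_{0,0} with u = 0 and those of S_{1,1} with u = 1. *)

Set Implicit Arguments. Unset Strict Implicit. Unset Printing Implicit Defensive.
Import GRing.Theory.
Local Open Scope ring_scope.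

Lemma card_swap_involution (T : finType) (A B : {set T}) (f : T -> T) :
  {in A, forall x, f x \in B} -> {in B, forall x, f x \in A} ->
  {in A, involutive f} -> {in B, involutive f} -> #|A| = #|B|.
Proof.
have card_le (X Y : {set T}) : {in X, forall x, f x \in Y} ->
    {in X, involutive f} -> (#|X| <= #|Y|)%N.
  move=> fXY fK; rewrite -(card_in_imset (can_in_inj fK)).
  by apply/subset_leq_card/subsetP => _ /imsetP[x Xx ->]; apply: fXY.
by move=> fAB fBA fKA fKB; apply/eqP; rewrite eqn_leq !card_le.
Qed.

Section Reciprocal.
Variable R : comNzRingType.
Implicit Types p q : {poly R}.

Definition recip (d : nat) p : {poly R} := \poly_(i < d.+1) p`_(d - i).

Lemma coef_recip d p k : (recip d p)`_k = if (k <= d)%N then p`_(d - k) else 0.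
Proof. exact: coef_poly. Qed.

Fact recip_is_semilinear d : semilinear (recip d).
Proof.
split=> [c p|p q]; apply/polyP => k; rewrite !(coefZ, coefD, coef_recip).
  by case: leqP; rewrite ?mulr0.
by case: leqP; rewrite ?addr0.
Qed.

HB.instance Definition _ d := GRing.isSemilinear.Build R {poly R} {poly R} _
  (recip d) (recip_is_semilinear d).

Lemma size_recip_le d p : (size (recip d p) <= d.+1)%N.
Proof. exact: size_poly. Qed.

Lemma size_recip d p : p`_0 != 0 -> size (recip d p) = d.+1.
Proof.
move=> p0; apply/anti_leq; rewrite size_recip_le /=.
rewrite ltnNge; apply: contra p0 => /(nth_default 0).
by rewrite coef_recip leqnn subnn => ->.
Qed.

Lemma recipK d p : (size p <= d.+1)%N -> recip d (recip d p) = p.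
Proof.
move=> sp; apply/polyP => k; rewrite !coef_recip.
case: leqP => kd; first by rewrite leq_subr subKn.
by apply/esym/nth_default/(leq_trans sp).
Qed.

Lemma recipXn d k : (k <= d)%N -> recip d 'X^k = 'X^(d - k).
Proof.
move=> kd; apply/polyP => i; rewrite coef_recip !coefXn.
case: leqP => id; last by apply/esym; case: eqP => //; lia.
by congr (_%:R); apply/eqP/eqP; lia.
Qed.

Lemma recipM da db p q : (size p <= da.+1)%N -> (size q <= db.+1)%N ->
  recip (da + db) (p * q) = recip da p * recip db q.
Proof.
move=> sp sq; rewrite -(take_poly_id sp) -(take_poly_id sq) /take_poly !poly_def.
rewrite big_distrl !linear_sum /= big_distrl; apply: eq_bigr => i _.
rewrite big_distrr !linear_sum /= big_distrr; apply: eq_bigr => j _.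
have [lt_i lt_j] := (ltn_ord i, ltn_ord j).
rewrite -scalerAl -scalerAr scalerA -exprD !linearZ /= !recipXn; [|lia|lia|lia].
by rewrite -scalerAl -scalerAr scalerA -exprD; congr (_ *: 'X^_); lia.
Qed.

Lemma deriv_recip_horner1 d p : (size p <= d.+1)%N ->
  (recip d p)^`().[1] = p.[1] *+ d - p^`().[1].
Proof.
move=> sp; rewrite -(take_poly_id sp) /take_poly poly_def !linear_sum /= !horner_sum.
rewrite -sumrMnl -sumrB; apply: eq_bigr => i _.
have lt_i := ltn_ord i.
rewrite !linearZ /= recipXn // !hornerZ !derivXn !hornerMn !hornerXn !expr1n.
by rewrite natrB // mulrBr !mulr_natr mulr1.
Qed.

End Reciprocal.

Lemma coef_comp_XaddC (R : comNzRingType) (p : {poly R}) a k :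
  (p \Po ('X + a%:P))`_k = p^`N(k).[a].
Proof.
rewrite /comp_poly addrC (nderiv_taylor_wide (n := size p + k.+1) (commr_polyX _)).
  under eq_bigr do rewrite nderivn_map horner_map /= mul_polyC.
  by rewrite -(poly_def _ (fun i => p^`N(i).[a])) coef_poly ltn_addl.
exact: leq_trans (eq_leq (size_map_polyC p)) (leq_addr _ _).
Qed.

Lemma coef1_comp_XaddC (R : comNzRingType) (p : {poly R}) a :
  (p \Po ('X + a%:P))`_1 = p^`().[a].
Proof. by rewrite coef_comp_XaddC nderivn1. Qed.

Lemma coef_comp_XaddC_subleading (R : comNzRingType) (p : {poly R}) a d :
  size p = d.+2 -> (p \Po ('X + a%:P))`_d = p`_d + p`_d.+1 * a *+ d.+1.
Proof.
move=> sp; rewrite coef_comp_XaddC (@horner_coef_wide _ 2); last first.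
  by apply: leq_trans (size_poly _ _) _; rewrite sp; lia.
rewrite !big_ord_recl big_ord0 addr0 !coef_nderivn addn0 addn1 binn binSn /=.
by rewrite expr0 mulr1 expr1 mulrnAl.
Qed.

Lemma irredp_same_size_divisors (R : idomainType) (p p' : {poly R}) :
  irreducible_poly p -> size p' = size p ->
  (forall q, q %| p' -> exists2 r, r %| p & size r = size q) ->
  irreducible_poly p'.
Proof.
move=> irr_p sp' divp'; split=> [|q q_neq1 dvd_qp']; first by rewrite sp'; case: irr_p.
have [r dvd_rp sr] := divp' q dvd_qp'.
have /eqp_size : r %= p by apply: irr_p; rewrite ?sr.
by rewrite -dvdp_size_eqp // sp' -sr => ->.
Qed.

Lemma irredp_comp_XaddC (R : idomainType) (p : {poly R}) a :
  irreducible_poly p -> irreducible_poly (p \Po ('X + a%:P)).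
Proof.
move=> irr_p; apply: irredp_same_size_divisors irr_p _ _.
  by rewrite size_comp_poly2 // size_XaddC.
move=> q dvd_q; exists (q \Po ('X - a%:P)).
  by rewrite -[p](comp_polyXaddC_K _ a) dvdp_comp_poly.
by rewrite size_comp_poly2 // size_XsubC.
Qed.

Lemma irredp_recip (F : fieldType) d (p : {poly F}) :
  size p = d.+1 -> p`_0 != 0 -> irreducible_poly p -> irreducible_poly (recip d p).
Proof.
move=> sp p0 irr_p; apply: irredp_same_size_divisors irr_p _ _.
  by rewrite size_recip ?sp.
move=> q /dvdpP[r Er].
have lead_p : (recip d p)`_0 != 0.
  have : lead_coef p != 0 by rewrite lead_coef_eq0 -size_poly_gt0 sp.
  by rewrite lead_coefE sp coef_recip subn0.
have r_neq0 : r != 0 by apply: contraNneq lead_p => r0; rewrite Er r0 mul0r coef0.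
have q_neq0 : q != 0 by apply: contraNneq lead_p => q0; rewrite Er q0 mulr0 coef0.
have q0_neq0 : q`_0 != 0 by apply: contraNneq lead_p; rewrite Er coef0M => ->; rewrite mulr0.
have sizes : ((size r).-1 + (size q).-1)%N = d.
  have := size_mul r_neq0 q_neq0; rewrite -Er size_recip //.
  by rewrite (polySpred r_neq0) (polySpred q_neq0) addSn addnS => -[->].
exists (recip (size q).-1 q); last by rewrite size_recip // -polySpred.
by rewrite -[p](recipK (eq_leq sp)) Er -sizes recipM ?dvdp_mull // -polySpred.
Qed.

Lemma irredp_noroot (R : idomainType) (p : {poly R}) x :
  irreducible_poly p -> (2 < size p)%N -> ~~ root p x.
Proof.
move=> irr_p; apply: contraTN; rewrite -dvdp_XsubCl => /irr_p.
by rewrite size_XsubC => /(_ isT)/eqp_size <-; rewrite size_XsubC.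
Qed.

Lemma F2_eq1 (x : 'F_2) : (x == 1) = (x != 0).
Proof. by case: x => [[|[|m]] //]. Qed.

Lemma F2_natr k : (k%:R : 'F_2) = (odd k)%:R.
Proof. by rewrite -Fp_nat_mod // modn2. Qed.

Lemma F2_add11 : (1 + 1 : 'F_2) = 0.
Proof. exact: val_inj. Qed.

Lemma F2_oppr (x : 'F_2) : - x = x.
Proof. by case: x => [[|[|m]] //] x2; apply: val_inj. Qed.

Lemma F2_coef_lead (p : {poly 'F_2}) n : size p = n.+1 -> p`_n = 1.
Proof.
move=> sp; apply/eqP; rewrite F2_eq1 -[n]/(n.+1.-1) -sp -lead_coefE lead_coef_eq0.
by rewrite -size_poly_gt0 sp.
Qed.

Section MonicOf.
Variable n : nat.
Implicit Types (c : {ffun 'I_n -> 'F_2}) (p : {poly 'F_2}).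

Lemma monic_ofE c : monic_of c = 'X^n + \poly_(k < n) (fgraph c)`_k.
Proof.
rewrite /monic_of poly_def; congr (_ + _); apply: eq_bigr => k _.
by rewrite mul_polyC nth_fgraph_ord.
Qed.

Lemma coef_monic_of c k :
  (monic_of c)`_k = if (k < n)%N then (fgraph c)`_k else (k == n)%:R.
Proof.
rewrite monic_ofE coefD coefXn coef_poly.
by case: ltnP => kn; rewrite ?addr0 // (ltn_eqF kn) add0r.
Qed.

Lemma size_monic_of c : size (monic_of c) = n.+1.
Proof. by rewrite monic_ofE size_polyDl size_polyXn // ltnS size_poly. Qed.

Lemma monic_of_inj : injective (@monic_of n).
Proof.
move=> c1 c2 eq_c; apply/ffunP => i; rewrite -!(nth_fgraph_ord 0).
by have := congr1 (fun p => p`_i) eq_c; rewrite /= !coef_monic_of ltn_ord.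
Qed.

Lemma monic_ofK p : size p = n.+1 -> monic_of [ffun i : 'I_n => p`_i] = p.
Proof.
move=> sp; apply/polyP => k; rewrite coef_monic_of; case: ltnP => kn.
  by rewrite -[k]/(val (Ordinal kn)) nth_fgraph_ord ffunE.
have [-> | k_neq_n] := eqVneq k n; first by rewrite F2_coef_lead.
by rewrite nth_default // sp ltn_neqAle eq_sym k_neq_n.
Qed.

Lemma card_monic_of_swap (P Q : pred {poly 'F_2}) f :
  (forall p, P p -> size p = n.+1) -> (forall p, Q p -> size p = n.+1) ->
  (forall p, P p -> Q (f p) /\ f (f p) = p) ->
  (forall p, Q p -> P (f p) /\ f (f p) = p) ->
  #|[set c : {ffun 'I_n -> 'F_2} | P (monic_of c)]|
  = #|[set c : {ffun 'I_n -> 'F_2} | Q (monic_of c)]|.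
Proof.
move=> sizeP sizeQ fPQ fQP.
pose F c : {ffun 'I_n -> 'F_2} := [ffun i : 'I_n => (f (monic_of c))`_i].
have monic_of_F c : P (monic_of c) || Q (monic_of c) -> monic_of (F c) = f (monic_of c).
  by case/orP => [/fPQ[/sizeQ sf _] | /fQP[/sizeP sf _]]; apply: monic_ofK.
have FK c : P (monic_of c) || Q (monic_of c) -> F (F c) = c.
  move=> PQc; apply: monic_of_inj; rewrite !monic_of_F ?PQc //.
    by case/orP: PQc => [/fPQ | /fQP] [].
  by case/orP: PQc => [/fPQ | /fQP] [-> _]; rewrite ?orbT.
apply: (card_swap_involution (f := F)) => c; rewrite !inE => PQc.
- by rewrite monic_of_F ?PQc //; have [] := fPQ _ PQc.
- by rewrite monic_of_F ?PQc ?orbT //; have [] := fQP _ PQc.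
- by rewrite FK ?PQc.
- by rewrite FK ?PQc ?orbT.
Qed.

End MonicOf.

Definition shift (p : {poly 'F_2}) : {poly 'F_2} := p \Po ('X + 1%:P).

Lemma size_shift p : size (shift p) = size p.
Proof. by rewrite size_comp_poly2 // size_XaddC. Qed.

Lemma shiftK : involutive shift.
Proof.
move=> p; rewrite /shift -comp_polyA comp_polyD comp_polyX comp_polyC -addrA.
by rewrite -polyCD F2_add11 addr0 comp_polyXr.
Qed.

Definition signature (n : nat) (p : {poly 'F_2}) : 'F_2 * 'F_2 * 'F_2 :=
  (p`_n.-1, p`_1, (shift p)`_1).

Definition signed (n : nat) (s : 'F_2 * 'F_2 * 'F_2) (p : {poly 'F_2}) : bool :=
  [&& size p == n.+1, `[< irreducible_poly p >] & signature n p == s].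

Definition S3 (n : nat) (s : 'F_2 * 'F_2 * 'F_2) : {set {ffun 'I_n -> 'F_2}} :=
  [set c | signed n s (monic_of c)].

Lemma card_S_split n i j : #|S n i j| = (#|S3 n (i, j, 0%R)| + #|S3 n (i, j, 1%R)|)%N.
Proof.
rewrite -(cardsID [set c | (shift (monic_of c))`_1 == 0] (S n i j)).
congr (_ + _)%N; apply: eq_card => c; rewrite !inE /signed size_monic_of eqxx /=.
  by rewrite !xpair_eqE -!andbA.
by rewrite !xpair_eqE F2_eq1 -!andbA andbC -!andbA.
Qed.

Section Signature.
Variable n : nat.
Hypotheses (n_odd : odd n) (n_gt1 : (1 < n)%N).
Implicit Types p : {poly 'F_2}.

Lemma signed_size s p : signed n s p -> size p = n.+1.
Proof. by case/and3P => /eqP. Qed.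

Lemma signed_shift a b c p : signed n (a, b, c) p -> signed n (a + 1, c, b) (shift p).
Proof.
case/and3P => /eqP sp /asboolP irr_p /eqP[tr_p ct_p u_p].
apply/and3P; split; first by rewrite size_shift sp.
  exact/asboolP/irredp_comp_XaddC.
have sp' : size p = n.-1.+2 by rewrite prednK // ltnW.
rewrite /signature shiftK ct_p [(shift p)`_n.-1](coef_comp_XaddC_subleading _ sp').
rewrite prednK ?(ltnW n_gt1) // (F2_coef_lead sp) mulr1 -[1 *+ n]/(n%:R).
by rewrite F2_natr n_odd tr_p u_p.
Qed.

Lemma signed_recip a b c p : signed n (a, b, c) p -> signed n (b, a, c + 1) (recip n p).
Proof.
case/and3P => /eqP sp /asboolP irr_p /eqP[tr_p ct_p u_p].
have [p0 p1] : p`_0 = 1 /\ p.[1] = 1.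
  have p_rootfree x : ~~ root p x by apply: irredp_noroot; rewrite ?sp.
  by rewrite -horner_coef0; split; apply/eqP; rewrite F2_eq1; apply: p_rootfree.
have p0_neq0 : p`_0 != 0 by rewrite p0 oner_eq0.
apply/and3P; split; first by rewrite size_recip.
  exact/asboolP/irredp_recip.
rewrite /signature /shift coef1_comp_XaddC deriv_recip_horner1 ?sp // !coef_recip.
have -> : (n - n.-1 = 1)%N by lia.
rewrite leq_pred (ltnW n_gt1) subn1 ct_p tr_p.
rewrite -coef1_comp_XaddC -/(shift p) u_p p1 -[1 *+ n]/(n%:R) F2_natr n_odd.
by rewrite F2_oppr addrC.
Qed.

Lemma signed_recip_shift_recip a b c p : signed n (a, b, c) p ->
  signed n (c + 1, b + 1, a + 1) (recip n (shift (recip n p))).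
Proof. by move/signed_recip/signed_shift/signed_recip. Qed.

Lemma recip_shift_recipK p : size p = n.+1 ->
  recip n (shift (recip n (recip n (shift (recip n p))))) = p.
Proof.
move=> sp; rewrite recipK ?size_shift ?size_recip_le // shiftK.
by rewrite recipK ?sp.
Qed.

Lemma card_S3_shift : #|S3 n (0, 0, 1)| = #|S3 n (1, 1, 0)|.
Proof.
apply: (card_monic_of_swap (f := shift)) => p; try exact: signed_size.
  by move/signed_shift; rewrite add0r shiftK.
by move/signed_shift; rewrite F2_add11 shiftK.
Qed.

Lemma card_S3_recip_shift_recip : #|S3 n (0, 0, 0)| = #|S3 n (1, 1, 1)|.
Proof.
apply: (card_monic_of_swap (f := fun p => recip n (shift (recip n p)))) => p;
  try exact: signed_size.
  move=> sp; rewrite recip_shift_recipK ?(signed_size sp) //.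
  by move/signed_recip_shift_recip: sp; rewrite add0r.
move=> sp; rewrite recip_shift_recipK ?(signed_size sp) //.
by move/signed_recip_shift_recip: sp; rewrite F2_add11.
Qed.

End Signature.

Local Close Scope ring_scope.

Theorem theorem1 (n : nat) :
  odd n -> 3 <= n -> #|S n 0%R 0%R| = #|S n 1%R 1%R|.
Proof.
move=> n_odd n_ge3; have n_gt1 : 1 < n by apply: leq_trans n_ge3.
rewrite !card_S_split card_S3_shift // card_S3_recip_shift_recip //.
exact: addnC.
Qed.
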